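(* Let $m,n\in\mathbb{N}$ with $m\ge2$, and $b_{n,i}(x)=\binom ni x^i(1-x)^{n-i}$ for $i=0,\dots,n$. Then \[ \sum_{i_1,\dots,i_m=0}^n\Bigl(\sum_{l=1}^m b_{n,i_1}(x_l)b_{n,i_2}(x_l)\cdots b_{n,i_m}(x_l)\;-\;m\,b_{n,i_1}(x_1)b_{n,i_2}(x_2)\cdots b_{n,i_m}(x_m)\Bigr)f\Bigl(\frac{i_1+\dots+i_m}{mn}\Bigr)\ge0 \] for every convex continuous function $f:[0,1]\to\mathbb{R}$ and all $x_1,\dots,x_m\in[0,1]$. *)

From Stdlib Require Import Reals List.
Open Scope R_scope.

Definition bern (n i : nat) (x : R) : R :=
  C n i * x ^ i * (1 - x) ^ (n - i).

Fixpoint rsum (m : nat) (F : nat -> R) : R :=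
  match m with O => 0 | S k => rsum k F + F k end.
Fixpoint rprod (m : nat) (F : nat -> R) : R :=
  match m with O => 1 | S k => rprod k F * F k end.

(* sum over all m-tuples (i_1,...,i_m) in {0,...,n}^m, tuples given as lists *)
Fixpoint sum_tuples (m n : nat) (F : list nat -> R) : R :=
  match m with
  | O => F nil
  | S k => sum_f_R0 (fun i => sum_tuples k n (fun l => F (i :: l))) n
  end.

Definition convex_on01 (f : R -> R) : Prop :=
  forall a b t, 0 <= a <= 1 -> 0 <= b <= 1 -> 0 <= t <= 1 ->
    f (t * a + (1 - t) * b) <= t * f a + (1 - t) * f b.

Definition continuous_on01 (f : R -> R) : Prop :=
  forall x, 0 <= x <= 1 -> limit1_in f (fun y => 0 <= y <= 1) (f x) x.

(* the summand: indices is = [i_1;...;i_m] (0-based positions), points x 0..x (m-1) *)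
Definition summand (m n : nat) (x : nat -> R) (f : R -> R) (is : list nat) : R :=
  (rsum m (fun l => rprod m (fun j => bern n (nth j is O) (x l)))
   - INR m * rprod m (fun j => bern n (nth j is O) (x j)))
  * f (INR (fold_right plus O is) / (INR m * INR n)).

(* Put g s := f (s / (m n)); convexity of f makes g convex on the grid
   {0, ..., m n}.  Reading Bernstein weights as binomial probabilities, the sum
   equals  sum_l E g(Bin(m n, x_l)) - m E g(S), where S is a sum of m n
   independent Bernoulli variables, n of them with parameter x_l for each l.
   So it suffices that for convex g the mean of g under a Poisson-binomial law
   with N parameters is at most the average over its parameters p of the means
   under Bin(N, p).  This goes by induction on N: conditioning on one Bernoulli
   variable replaces g by a smoothed, still convex function, and what remains
   is to compare the law with parameters (a, b, ..., b) with Bin(N, a) and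
   Bin(N, b). *)

From Stdlib Require Import Reals List Lra Lia Psatz Factorial.
Open Scope R_scope.

(* [pbin_mean ps g] is the expectation of [g S], where [S] is a sum of
   independent Bernoulli variables with the parameters listed in [ps]. *)
Fixpoint pbin_mean (ps : list R) (g : nat -> R) : R :=
  match ps with
  | nil => g O
  | p :: t => p * pbin_mean t (fun s => g (S s)) + (1 - p) * pbin_mean t g
  end.

Definition probs (ps : list R) : Prop := Forall (fun p => 0 <= p <= 1) ps.

Definition bsmooth (p : R) (g : nat -> R) (s : nat) : R :=
  p * g (S s) + (1 - p) * g s.

Definition fdiff (g : nat -> R) (s : nat) : R := g (S s) - g s.

Definition nondecr_on (K : nat) (d : nat -> R) : Prop :=
  forall s, (s < K)%nat -> d s <= d (S s).

Definition dconvex_on (K : nat) (g : nat -> R) : Prop :=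
  forall s, (s + 2 <= K)%nat -> fdiff g s <= fdiff g (S s).

Lemma pbin_mean_ext ps g h :
  (forall s, g s = h s) -> pbin_mean ps g = pbin_mean ps h.
Proof.
  revert g h; induction ps as [|p t IH]; intros g h E; simpl.
  - apply E.
  - rewrite (IH (fun s => g (S s)) (fun s => h (S s))), (IH g h); auto.
Qed.

Lemma pbin_mean_lin ps a b g h :
  pbin_mean ps (fun s => a * g s + b * h s) = a * pbin_mean ps g + b * pbin_mean ps h.
Proof.
  revert g h; induction ps as [|p t IH]; intros g h; simpl.
  - reflexivity.
  - rewrite (IH (fun s => g (S s)) (fun s => h (S s))), IH; ring.
Qed.

Lemma pbin_mean_sub ps g h :
  pbin_mean ps (fun s => g s - h s) = pbin_mean ps g - pbin_mean ps h.
Proof.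
  rewrite (pbin_mean_ext ps _ (fun s => 1 * g s + (-1) * h s)) by (intro; ring).
  rewrite pbin_mean_lin; ring.
Qed.

Lemma pbin_mean_cons p t g : pbin_mean (p :: t) g = pbin_mean t (bsmooth p g).
Proof. unfold bsmooth; rewrite pbin_mean_lin; reflexivity. Qed.

Lemma pbin_mean_cons_sub p q t g :
  pbin_mean (q :: t) g - pbin_mean (p :: t) g = (q - p) * pbin_mean t (fdiff g).
Proof. unfold fdiff; rewrite pbin_mean_sub; simpl; ring. Qed.

Lemma pbin_mean_swap p q t g :
  pbin_mean (p :: q :: t) g = pbin_mean (q :: p :: t) g.
Proof.
  rewrite !pbin_mean_cons; apply pbin_mean_ext; intro s; unfold bsmooth; ring.
Qed.

Lemma pbin_mean_bsmooth_sub ps a b g :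
  pbin_mean ps (bsmooth a g) - pbin_mean ps (bsmooth b g)
  = (a - b) * pbin_mean ps (fdiff g).
Proof.
  rewrite <- pbin_mean_sub, <- (Rplus_0_r ((a - b) * _)).
  rewrite <- (Rmult_0_l (pbin_mean ps (fdiff g))), <- pbin_mean_lin.
  apply pbin_mean_ext; intro s; unfold bsmooth, fdiff; ring.
Qed.

Lemma pbin_mean_app ps qs h :
  pbin_mean (ps ++ qs) h = pbin_mean ps (fun i => pbin_mean qs (fun t => h (i + t)%nat)).
Proof.
  revert h; induction ps as [|p t IH]; intro h; simpl; [reflexivity|].
  rewrite !IH; reflexivity.
Qed.

Lemma pbin_mean_nonneg ps h :
  probs ps -> (forall s, (s <= length ps)%nat -> 0 <= h s) -> 0 <= pbin_mean ps h.
Proof.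
  intro Hps; revert h; induction Hps as [|p t Hp _ IH]; intros h Hh; simpl.
  - apply Hh; simpl; lia.
  - simpl in Hh.
    assert (0 <= pbin_mean t (fun s => h (S s))) by (apply IH; intros; apply Hh; lia).
    assert (0 <= pbin_mean t h) by (apply IH; intros; apply Hh; lia).
    nra.
Qed.

Lemma bsmooth_nondecr_on K p d :
  0 <= p <= 1 -> nondecr_on (S K) d -> nondecr_on K (bsmooth p d).
Proof.
  unfold nondecr_on, bsmooth; intros Hp Hd s Hs.
  assert (d s <= d (S s)) by (apply Hd; lia).
  assert (d (S s) <= d (S (S s))) by (apply Hd; lia).
  nra.
Qed.

Lemma bsmooth_dconvex_on K p g :
  0 <= p <= 1 -> dconvex_on (S K) g -> dconvex_on K (bsmooth p g).
Proof.
  unfold dconvex_on, fdiff, bsmooth; intros Hp Hg s Hs.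
  assert (A := Hg s ltac:(lia)); assert (B := Hg (S s) ltac:(lia)).
  nra.
Qed.

Lemma dconvex_on_fdiff K g : dconvex_on (S K) g -> nondecr_on K (fdiff g).
Proof. intros Hg s Hs; apply Hg; lia. Qed.

Lemma binom_mean_mono K p q d :
  0 <= p <= q -> q <= 1 -> nondecr_on K d ->
  pbin_mean (repeat p K) d <= pbin_mean (repeat q K) d.
Proof.
  revert d; induction K as [|K IH]; intros d Hpq Hq Hd; simpl repeat; [simpl; lra|].
  assert (Hpos : 0 <= pbin_mean (repeat p K) (fdiff d)).
  { apply pbin_mean_nonneg.
    - apply Forall_forall; intros r Hr; apply repeat_spec in Hr; lra.
    - rewrite repeat_length; intros s Hs; unfold fdiff.
      assert (d s <= d (S s)) by (apply Hd; lia); lra. }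
  assert (Hstep := pbin_mean_cons_sub p q (repeat p K) d).
  rewrite !(pbin_mean_cons q) in *.
  assert (pbin_mean (repeat p K) (bsmooth q d) <= pbin_mean (repeat q K) (bsmooth q d))
    by (apply IH, bsmooth_nondecr_on; auto; lra).
  nra.
Qed.

Lemma fdiff_bsmooth p g s : fdiff (bsmooth p g) s = bsmooth p (fdiff g) s.
Proof. unfold fdiff, bsmooth; ring. Qed.

Lemma binom_mean_sub_mul_nonneg K a b d :
  0 <= a <= 1 -> 0 <= b <= 1 -> nondecr_on K d ->
  0 <= (a - b) * (pbin_mean (repeat a K) d - pbin_mean (repeat b K) d).
Proof.
  intros Ha Hb Hd; destruct (Rle_dec a b).
  - assert (pbin_mean (repeat a K) d <= pbin_mean (repeat b K) d)
      by (apply binom_mean_mono; auto; lra).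
    nra.
  - assert (pbin_mean (repeat b K) d <= pbin_mean (repeat a K) d)
      by (apply binom_mean_mono; auto; lra).
    nra.
Qed.

(* After smoothing by [b], the induction leaves the error term
   [(a - b) * (E_a (fdiff g) - E_b (fdiff g))], which is nonnegative because
   [fdiff g] is nondecreasing. *)
Lemma pbin_mean_mix_le K a b g :
  0 <= a <= 1 -> 0 <= b <= 1 -> dconvex_on (S K) g ->
  INR (S K) * pbin_mean (a :: repeat b K) g
  <= pbin_mean (repeat a (S K)) g + INR K * pbin_mean (repeat b (S K)) g.
Proof.
  revert g; induction K as [|K IH]; intros g Ha Hb Hg; [simpl; lra|].
  assert (IHs := IH (bsmooth b g) Ha Hb (bsmooth_dconvex_on _ _ _ Hb Hg)).
  assert (Eab : pbin_mean (a :: repeat b (S K)) g = pbin_mean (a :: repeat b K) (bsmooth b g))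
    by (change (repeat b (S K)) with (b :: repeat b K);
        rewrite pbin_mean_swap, pbin_mean_cons; reflexivity).
  assert (Ea := pbin_mean_cons a (repeat a (S K)) g).
  assert (Eb := pbin_mean_cons b (repeat b (S K)) g).
  assert (Da := pbin_mean_bsmooth_sub (repeat a (S K)) a b g).
  assert (Db : pbin_mean (repeat b (S K)) (bsmooth b g) - pbin_mean (a :: repeat b K) (bsmooth b g)
               = (b - a) * pbin_mean (repeat b (S K)) (fdiff g)).
  { change (repeat b (S K)) with (b :: repeat b K).
    rewrite pbin_mean_cons_sub, (pbin_mean_cons b (repeat b K) (fdiff g)).
    rewrite (pbin_mean_ext _ _ _ (fdiff_bsmooth b g)); reflexivity. }
  assert (Hmono := binom_mean_sub_mul_nonneg (S K) a b (fdiff g) Ha Hb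
                     (dconvex_on_fdiff _ _ Hg)).
  change (repeat a (S (S K))) with (a :: repeat a (S K)).
  change (repeat b (S (S K))) with (b :: repeat b (S K)).
  rewrite Eab, Ea, Eb.
  rewrite (S_INR (S K)), (S_INR K) in *.
  nra.
Qed.

Fixpoint lsum (F : R -> R) (l : list R) : R :=
  match l with nil => 0 | a :: t => F a + lsum F t end.

Lemma lsum_ext F G l : (forall r, F r = G r) -> lsum F l = lsum G l.
Proof. intro E; induction l as [|r l IH]; simpl; [|rewrite IH, E]; reflexivity. Qed.

Lemma lsum_le_affine F G c d A l :
  (forall q, In q l -> c * F q <= A + d * G q) ->
  c * lsum F l <= INR (length l) * A + d * lsum G l.
Proof.
  induction l as [|r l IH]; intro H; cbn [length lsum]; [simpl; lra|].
  assert (H1 := H r (or_introl eq_refl)).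
  assert (H2 := IH (fun q Hq => H q (or_intror Hq))).
  rewrite S_INR; nra.
Qed.

(* Induction on [ps]: the hypothesis for the smoothed function [bsmooth p g]
   leaves the laws [p :: repeat q K], bounded by [pbin_mean_mix_le]. *)
Lemma pbin_mean_convex_le ps g :
  probs ps -> dconvex_on (length ps) g ->
  INR (length ps) * pbin_mean ps g <= lsum (fun p => pbin_mean (repeat p (length ps)) g) ps.
Proof.
  revert g; induction ps as [|p qs IH]; intros g Hps Hg; [simpl; lra|].
  inversion Hps as [|? ? Hp Hqs]; subst.
  destruct qs as [|q0 qs0]; [simpl; lra|].
  set (qs := q0 :: qs0) in *; set (K := length qs) in *.
  assert (HK : (0 < K)%nat) by (unfold K, qs; simpl; lia).
  change (length (p :: qs)) with (S K) in *.
  assert (I1 := IH (bsmooth p g) Hqs (bsmooth_dconvex_on _ _ _ Hp Hg)); fold K in I1.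
  rewrite (lsum_ext _ (fun q => pbin_mean (p :: repeat q K) g)) in I1
    by (intro; rewrite pbin_mean_cons; reflexivity).
  assert (I2 : INR (S K) * lsum (fun q => pbin_mean (p :: repeat q K) g) qs
               <= INR K * pbin_mean (repeat p (S K)) g
                  + INR K * lsum (fun q => pbin_mean (repeat q (S K)) g) qs).
  { apply lsum_le_affine; intros q Hq; apply pbin_mean_mix_le; auto.
    rewrite Forall_forall in Hqs; auto. }
  rewrite pbin_mean_cons; cbn [lsum].
  assert (0 < INR K) by (apply lt_0_INR; auto).
  rewrite S_INR in *; nra.
Qed.

Lemma C_n_0 n : C n 0 = 1.
Proof.
  unfold C; rewrite Nat.sub_0_r; simpl fact; rewrite INR_1.
  field; apply INR_fact_neq_0.
Qed.

Lemma C_n_n n : C n n = 1.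
Proof.
  unfold C; rewrite Nat.sub_diag; simpl fact; rewrite INR_1.
  field; apply INR_fact_neq_0.
Qed.

Lemma bern_S n i y : (i <= S n)%nat ->
  bern (S n) i y = (match i with O => 0 | S j => y * bern n j y end)
                   + (if Nat.eqb i (S n) then 0 else (1 - y) * bern n i y).
Proof.
  intro Hi; unfold bern; destruct i as [|j].
  - simpl Nat.eqb; rewrite !C_n_0, !Nat.sub_0_r; simpl; ring.
  - destruct (Nat.eqb (S j) (S n)) eqn:E.
    + apply Nat.eqb_eq in E; injection E as ->.
      rewrite !C_n_n, !Nat.sub_diag; simpl; ring.
    + apply Nat.eqb_neq in E.
      rewrite <- pascal by lia.
      replace (S n - S j)%nat with (S (n - S j)) by lia.
      replace (n - j)%nat with (S (n - S j)) by lia.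
      simpl; ring.
Qed.

Lemma bern_sum_binom_mean n y g :
  sum_f_R0 (fun i => bern n i y * g i) n = pbin_mean (repeat y n) g.
Proof.
  revert g; induction n as [|n IH]; intro g.
  - simpl; unfold bern; rewrite C_n_0; simpl; ring.
  - cbn [repeat pbin_mean]; rewrite <- !IH.
    rewrite (sum_eq _ (fun i => (match i with O => 0 | S j => y * bern n j y end) * g i
                          + (if Nat.eqb i (S n) then 0 else (1 - y) * bern n i y) * g i))
      by (intros i Hi; rewrite bern_S by lia; ring).
    rewrite sum_plus, decomp_sum, tech5, Nat.eqb_refl by lia; simpl pred.
    rewrite (sum_eq (fun i => (if Nat.eqb i (S n) then 0 else (1 - y) * bern n i y) * g i)
                    (fun i => bern n i y * g i * (1 - y))).
    2:{ intros i Hi; destruct (Nat.eqb_spec i (S n)); [lia|ring]. }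
    rewrite (sum_eq (fun i => (match S i with O => 0 | S j => y * bern n j y end) * g (S i))
                    (fun i => bern n i y * g (S i) * y)) by (intros; simpl; ring).
    rewrite <- !scal_sum; ring.
Qed.

Lemma sum_tuples_ext k n F G :
  (forall l, F l = G l) -> sum_tuples k n F = sum_tuples k n G.
Proof.
  revert F G; induction k as [|k IH]; intros F G E; simpl; auto.
  apply sum_eq; intros; apply IH; intros; apply E.
Qed.

Lemma sum_tuples_lin k n a b F G :
  sum_tuples k n (fun l => a * F l + b * G l) = a * sum_tuples k n F + b * sum_tuples k n G.
Proof.
  revert F G; induction k as [|k IH]; intros F G; simpl; auto.
  rewrite (sum_eq _ (fun i => a * sum_tuples k n (fun l => F (i :: l))
                              + b * sum_tuples k n (fun l => G (i :: l))))
    by (intros; apply (IH (fun l => F (i :: l)) (fun l => G (i :: l)))).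
  rewrite sum_plus, !scal_sum.
  f_equal; apply sum_eq; intros; ring.
Qed.

Lemma sum_tuples_scal k n a F :
  sum_tuples k n (fun l => a * F l) = a * sum_tuples k n F.
Proof.
  rewrite (sum_tuples_ext _ _ _ (fun l => a * F l + 0 * F l)) by (intro; ring).
  rewrite sum_tuples_lin; ring.
Qed.

Lemma sum_tuples_rsum M k n (Fs : nat -> list nat -> R) :
  sum_tuples k n (fun l => rsum M (fun j => Fs j l)) = rsum M (fun j => sum_tuples k n (Fs j)).
Proof.
  induction M as [|M IH]; simpl.
  - rewrite (sum_tuples_ext _ _ _ (fun _ => 0 * 1)) by (intro; ring).
    rewrite (sum_tuples_scal k n 0 (fun _ => 1)); ring.
  - rewrite (sum_tuples_ext _ _ _ (fun l => 1 * rsum M (fun j => Fs j l) + 1 * Fs M l))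
      by (intro; ring).
    rewrite sum_tuples_lin, IH; ring.
Qed.

Lemma rsum_ext k F G : (forall j, F j = G j) -> rsum k F = rsum k G.
Proof. intro E; induction k as [|k IH]; simpl; [|rewrite IH, E]; reflexivity. Qed.

Lemma rsum_mulr k F c : rsum k F * c = rsum k (fun j => F j * c).
Proof. induction k as [|k IH]; simpl; [|rewrite <- IH]; ring. Qed.

Lemma rsum_const k c : rsum k (fun _ => c) = INR k * c.
Proof. induction k as [|k IH]; [simpl; ring|]; cbn [rsum]; rewrite IH, S_INR; ring. Qed.

Lemma rprod_S_shift k F : rprod (S k) F = F O * rprod k (fun j => F (S j)).
Proof.
  revert F; induction k as [|k IH]; intro F; [simpl; ring|].
  change (rprod (S (S k)) F) with (rprod (S k) F * F (S k)); rewrite IH; simpl; ring.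
Qed.

Definition rep_blocks (n k : nat) (x : nat -> R) : list R :=
  flat_map (fun j => repeat (x j) n) (seq 0 k).

Lemma rep_blocks_S n k x :
  rep_blocks n (S k) x = repeat (x O) n ++ rep_blocks n k (fun j => x (S j)).
Proof.
  unfold rep_blocks; cbn [seq flat_map]; f_equal.
  rewrite <- seq_shift, !flat_map_concat_map, map_map; reflexivity.
Qed.

Lemma rep_blocks_const n k c : rep_blocks n k (fun _ => c) = repeat c (k * n).
Proof.
  induction k as [|k IH]; [reflexivity|].
  rewrite rep_blocks_S, IH, <- repeat_app; reflexivity.
Qed.

Lemma length_rep_blocks n k x : length (rep_blocks n k x) = (k * n)%nat.
Proof.
  unfold rep_blocks; rewrite (flat_map_constant_length (c := n)), length_seq; auto.
  intros; apply repeat_length.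
Qed.

Lemma rep_blocks_probs n k x :
  (forall j, (j < k)%nat -> 0 <= x j <= 1) -> probs (rep_blocks n k x).
Proof.
  intro Hx; apply Forall_forall; intros p Hp.
  apply in_flat_map in Hp as [j [Hj Hp]].
  apply repeat_spec in Hp as ->; apply in_seq in Hj; apply Hx; lia.
Qed.

Lemma lsum_app F l1 l2 : lsum F (l1 ++ l2) = lsum F l1 + lsum F l2.
Proof. induction l1 as [|r l1 IH]; simpl; [|rewrite IH]; ring. Qed.

Lemma lsum_repeat F c n : lsum F (repeat c n) = INR n * F c.
Proof. induction n as [|n IH]; [simpl; ring|]; cbn [repeat lsum]; rewrite IH, S_INR; ring. Qed.

Lemma lsum_rep_blocks F n k x :
  lsum F (rep_blocks n k x) = INR n * rsum k (fun j => F (x j)).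
Proof.
  induction k as [|k IH]; [simpl; ring|].
  unfold rep_blocks in *; rewrite seq_S, flat_map_app, lsum_app, IH; cbn [flat_map rsum].
  rewrite app_nil_r, lsum_repeat, Nat.add_0_l; ring.
Qed.

Lemma sum_tuples_bern_prod k n (y : nat -> R) (h : nat -> R) :
  sum_tuples k n (fun l => rprod k (fun j => bern n (nth j l O) (y j)) * h (fold_right plus O l))
  = pbin_mean (rep_blocks n k y) h.
Proof.
  revert y h; induction k as [|k IH]; intros y h; [simpl; ring|].
  rewrite rep_blocks_S, pbin_mean_app, <- bern_sum_binom_mean; cbn [sum_tuples].
  apply sum_eq; intros i _.
  rewrite <- (IH (fun j => y (S j)) (fun t => h (i + t)%nat)), <- sum_tuples_scal.
  apply sum_tuples_ext; intro l; rewrite rprod_S_shift; simpl; ring.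
Qed.

Lemma sum_tuples_bern_diff m n x h :
  sum_tuples m n (fun l =>
      (rsum m (fun k => rprod m (fun j => bern n (nth j l O) (x k)))
       - INR m * rprod m (fun j => bern n (nth j l O) (x j))) * h (fold_right plus O l))
  = rsum m (fun k => pbin_mean (repeat (x k) (m * n)) h) - INR m * pbin_mean (rep_blocks n m x) h.
Proof.
  rewrite (sum_tuples_ext _ _ _ (fun l =>
      1 * rsum m (fun k => rprod m (fun j => bern n (nth j l O) (x k)) * h (fold_right plus O l))
      + (- INR m) * (rprod m (fun j => bern n (nth j l O) (x j)) * h (fold_right plus O l))))
    by (intro; rewrite <- rsum_mulr; ring).
  rewrite sum_tuples_lin, sum_tuples_rsum, sum_tuples_bern_prod.
  rewrite (rsum_ext _ _ (fun k => pbin_mean (repeat (x k) (m * n)) h)); [ring|].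
  intro k; rewrite (sum_tuples_bern_prod m n (fun _ => x k)), rep_blocks_const; reflexivity.
Qed.

Lemma convex_on01_grid f N :
  (0 < N)%nat -> convex_on01 f -> dconvex_on N (fun s => f (INR s / INR N)).
Proof.
  intros HN Hf s Hs; unfold fdiff.
  assert (0 < INR N) by (apply lt_0_INR; auto).
  assert (Hgrid : forall t, (t <= N)%nat -> 0 <= INR t / INR N <= 1).
  { intros t Ht; assert (INR t <= INR N) by (apply le_INR; auto).
    assert (0 <= INR t) by apply pos_INR.
    assert (INR t / INR N * INR N = INR t) by (field; lra).
    split; nra. }
  assert (Hmid := Hf (INR s / INR N) (INR (S (S s)) / INR N) (1/2)
                    (Hgrid s ltac:(lia)) (Hgrid (S (S s)) ltac:(lia)) ltac:(lra)).
  replace (1 / 2 * (INR s / INR N) + (1 - 1 / 2) * (INR (S (S s)) / INR N))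
    with (INR (S s) / INR N) in Hmid by (rewrite !S_INR; field; lra).
  lra.
Qed.

Theorem theorem4 (m n : nat) (hm : (2 <= m)%nat) (f : R -> R)
  (hconv : convex_on01 f) (hcont : continuous_on01 f)
  (x : nat -> R) (hx : forall l, (l < m)%nat -> 0 <= x l <= 1) :
  0 <= sum_tuples m n (summand m n x f).
Proof.
  unfold summand; rewrite <- mult_INR.
  rewrite (sum_tuples_bern_diff m n x (fun s => f (INR s / INR (m * n)))).
  set (g := fun s => f (INR s / INR (m * n))).
  destruct n as [|n].
  - assert (Hnil : rep_blocks 0 m x = nil)
      by (apply length_zero_iff_nil; rewrite length_rep_blocks; lia).
    rewrite Hnil, (rsum_ext _ _ (fun _ => g O)), rsum_const; [simpl; lra|].
    intro k; rewrite Nat.mul_0_r; reflexivity.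
  - assert (Hm : (0 < m)%nat) by lia.
    assert (Hcvx : dconvex_on (length (rep_blocks (S n) m x)) g)
      by (rewrite length_rep_blocks; apply convex_on01_grid; auto; lia).
    assert (Hmain := pbin_mean_convex_le _ g (rep_blocks_probs _ _ _ hx) Hcvx).
    rewrite length_rep_blocks, lsum_rep_blocks, mult_INR in Hmain.
    assert (0 < INR (S n)) by (apply lt_0_INR; lia).
    nra.
Qed.
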